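(* Let $n\ge3$, $\varepsilon\ge0$, let $\mathcal{M}\subseteq\{1,\dots,n\}$ be a sample set that is a union of twin samples (pairs $\{i,i+1\}$) and contains $1$ and $n$, let $A=\mathbf{I}_{\mathcal{M}}$ and $y\in\mathbb{R}^{|\mathcal{M}|}$. If $z^\star\in\mathbb{R}^n$ is an optimal solution of $\min_{z}\|Dz\|_1$ subject to $\|Az-y\|_\infty\le\varepsilon$, then $z^\star$ is sign consistent with respect to $\mathcal{M}$.
   Context: $D\in\mathbb{R}^{(n-2)\times n}$ is the second-order difference operator, $(Dz)_k=z_k-2z_{k+1}+z_{k+2}$; $\mathbf{I}_{\mathcal{M}}$ consists of the rows of the identity indexed by $\mathcal{M}$, so $Az=z_{\mathcal{M}}$. For $k\in\{2,\dots,n-1\}$ let $s_k=\mathrm{sign}(z_{k-1}-2z_k+z_{k+1})$ (with $\mathrm{sign}(0)=0$). A profile $z$ is sign consistent (with respect to $\mathcal{M}$) if for any two consecutive samples $i<j$ in $\mathcal{M}$ (no element of $\mathcal{M}$ strictly between them) one of the following holds: (i) for all $k,h$ with $i\le k,h\le j$ (for which $s_k,s_h$ are defined), $s_k\ne0$ and $s_h\ne0$ imply $s_k=s_h$; (ii) $s_k=0$ for every $k$ with $i<k<j$. *)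

(* Indices are 1-based natural numbers as in the paper:
   a vector z in R^n is a function z : nat -> R of which only z 1, ..., z n
   are relevant. *)
From mathcomp Require Import all_boot all_order all_algebra.
Set Implicit Arguments. Unset Strict Implicit. Unset Printing Implicit Defensive.
Import Order.TTheory GRing.Theory Num.Theory.
Local Open Scope ring_scope.

Definition D2 {R : numDomainType} (z : nat -> R) (k : nat) : R :=
  z k - 2 * z k.+1 + z k.+2.

Definition tv2 {R : numDomainType} (n : nat) (z : nat -> R) : R :=
  \sum_(1 <= k < n.-1) `|D2 z k|.

(* ||A z - y||_inf <= eps, A = I_M ; y is indexed by the elements of M *)
Definition feasible {R : numDomainType} (M : pred nat) (y : nat -> R) (eps : R)
  (z : nat -> R) : Prop :=
  forall i, M i -> `|z i - y i| <= eps.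

Definition optimal {R : numDomainType} (n : nat) (M : pred nat) (y : nat -> R)
  (eps : R) (zs : nat -> R) : Prop :=
  feasible M y eps zs /\
  forall z, feasible M y eps z -> tv2 n zs <= tv2 n z.

Definition twin_union (n : nat) (M : pred nat) : Prop :=
  (forall i, M i -> (1 <= i <= n)%N) /\
  (forall i, M i -> exists j, [/\ (j = i \/ j.+1 = i), (1 <= j)%N, (j.+1 <= n)%N,
                                 M j & M j.+1]).

Definition sgn2 {R : numDomainType} (z : nat -> R) (k : nat) : R :=
  Num.sg (D2 z k.-1).

Definition sign_consistent {R : numDomainType} (n : nat) (M : pred nat)
  (z : nat -> R) : Prop :=
  forall i j, M i -> M j -> (i < j)%N ->
    (forall m, (i < m < j)%N -> ~~ M m) ->
    (forall k h, (i <= k <= j)%N -> (i <= h <= j)%N ->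
       (2 <= k <= n.-1)%N -> (2 <= h <= n.-1)%N ->
       sgn2 z k != 0 -> sgn2 z h != 0 -> sgn2 z k = sgn2 z h)
    \/ (forall k, (i < k < j)%N -> sgn2 z k = 0).

(* Suppose the nonzero signs of the second differences of an optimal [z] disagree
   between consecutive samples [i < j].  Perturb [z] by [t * hat a b c], a hat
   function with kinks at three points [i <= a < b < c <= j]: it vanishes on every
   sample, so feasibility is kept, and it changes [Dz] only in the three rows of
   its kinks.  Hence the one-sided derivative of [||Dz||_1] along [+hat] and
   [-hat] only involves these three entries, and for a suitable choice of the
   kinks (one of them at a sign change) one of the two derivatives is negative,
   contradicting optimality.  The twin of [i] (resp. [j]) lies outside the gap,
   which keeps [a - 1] and [c - 1] among the rows of [D]. *)

From mathcomp Require Import all_boot all_order all_algebra.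
From mathcomp Require Import ring lra zify.
Import Order.TTheory GRing.Theory Num.Theory.
Local Open Scope ring_scope.
Set Implicit Arguments. Unset Strict Implicit.

Section NormSlope.
Variable R : realFieldType.
Implicit Types u v t : R.

Definition norm_slope u v := if u == 0 then `|v| else Num.sg u * v.

Lemma norm_slope0 u : norm_slope u 0 = 0.
Proof. by rewrite /norm_slope normr0 mulr0 if_same. Qed.

Lemma normD_slope u v : exists2 d, 0 < d &
  forall t, 0 < t <= d -> `|u + t * v| = `|u| + t * norm_slope u v.
Proof.
rewrite /norm_slope; case: (eqVneq u 0) => [->|u0] /=.
  by exists 1 => // t /andP[t0 _]; rewrite normr0 !add0r normrM gtr0_norm.
exists (`|u| / (`|v| + 1)) => [|t /andP[t0]].
  by rewrite divr_gt0 ?normr_gt0 ?ltr_wpDl.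
rewrite ler_pdivlMr ?ltr_wpDl // mulrDr mulr1 => tv.
have := ler_norm (t * v); have := ler_norm (- (t * v)).
rewrite normrN normrM (gtr0_norm t0) => vl vr.
by case: sgrP u0 tv => // _ _ tv; [rewrite gtr0_norm | rewrite ltr0_norm]; lra.
Qed.

Lemma sum_normD_slope (I : Type) (r : seq I) (u v : I -> R) : exists2 d, 0 < d &
  forall t, 0 < t <= d -> \sum_(k <- r) `|u k + t * v k| =
    \sum_(k <- r) `|u k| + t * \sum_(k <- r) norm_slope (u k) (v k).
Proof.
elim: r => [|k r [d d0 IHr]]; first by exists 1 => // t _; rewrite !big_nil mulr0 addr0.
have [dk dk0 Hk] := normD_slope (u k) (v k).
exists (Order.min dk d) => [|t /andP[t0]]; first by rewrite lt_min dk0.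
rewrite le_min => /andP[tk td].
by rewrite !big_cons Hk ?t0 // IHr ?t0 // mulrDr addrACA.
Qed.

End NormSlope.

Definition tv2_slope {R : realFieldType} (n : nat) (z h : nat -> R) : R :=
  \sum_(1 <= k < n.-1) norm_slope (D2 z k) (D2 h k).

Section Optimality.
Variables (R : realFieldType) (n : nat).
Implicit Types (z h : nat -> R) (t : R).

Lemma D2Z z t k : D2 (fun s => t * z s) k = t * D2 z k.
Proof. by rewrite /D2; ring. Qed.

Lemma D2_addZ z h t k : D2 (fun s => z s + t * h s) k = D2 z k + t * D2 h k.
Proof. by rewrite /D2; ring. Qed.

Lemma tv2_addZ z h : exists2 d, 0 < d & forall t, 0 < t <= d ->
  tv2 n (fun s => z s + t * h s) = tv2 n z + t * tv2_slope n z h.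
Proof.
have [d d0 Hd] := sum_normD_slope (index_iota 1 n.-1) (D2 z) (D2 h).
by exists d => // t /Hd <-; apply: eq_bigr => k _; rewrite D2_addZ.
Qed.

Lemma optimal_tv2_slope_ge0 (M : pred nat) (y : nat -> R) eps z h :
  optimal n M y eps z -> (forall s, M s -> h s = 0) -> 0 <= tv2_slope n z h.
Proof.
move=> [feas opt] hM; have [d d0 Hd] := tv2_addZ z h.
have feas_d : feasible M y eps (fun s => z s + d * h s).
  by move=> s Ms; rewrite hM // mulr0 addr0; apply: feas.
have := opt _ feas_d; rewrite Hd ?d0 ?lexx // lerDl.
by rewrite pmulr_rge0.
Qed.
End Optimality.

Section Hat.
Variable R : realFieldType.

(* Truncated subtraction makes [ramp p] the hinge [x |-> max (x - p) 0]. *)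
Definition ramp (p x : nat) : R := (x - p)%:R.

(* For [a < b < c]: piecewise linear, kinks only at [a], [b], [c], zero outside (a, c). *)
Definition hat (a b c x : nat) : R :=
  (c - b)%:R * ramp a x - (c - a)%:R * ramp b x + (b - a)%:R * ramp c x.

Lemma D2_ramp p k : (0 < p)%N -> D2 (ramp p) k = (k == p.-1)%:R.
Proof.
move=> p0; rewrite /D2 /ramp; case: ltngtP => kp.
- have [-> -> ->] : [/\ k - p = 0, k.+1 - p = 0 & k.+2 - p = 0]%N by split; lia.
  by rewrite mulr0 subr0 addr0.
- have [-> ->] : [/\ k.+1 - p = (k - p).+1 & k.+2 - p = (k - p).+2]%N by split; lia.
  by rewrite -[(k - p).+2]addn2 -[(k - p).+1]addn1 !natrD /= mulr0n; lra.
- have [-> -> ->] : [/\ k - p = 0, k.+1 - p = 0 & k.+2 - p = 1]%N by split; lia.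
  by rewrite mulr0 subr0 add0r.
Qed.

Lemma hat_out a b c x : (a < b < c)%N -> (x <= a)%N || (c <= x)%N -> hat a b c x = 0.
Proof.
move=> /andP[ab bc] /orP[xa|cx]; rewrite /hat /ramp.
  have [-> -> ->] : [/\ x - a = 0, x - b = 0 & x - c = 0]%N by split; lia.
  by rewrite !mulr0 subr0 addr0.
rewrite !natrB; try lia; lra.
Qed.

Lemma D2_hat a b c k : (0 < a < b)%N -> (b < c)%N -> D2 (hat a b c) k =
  (c - b)%:R * (k == a.-1)%:R - (c - a)%:R * (k == b.-1)%:R + (b - a)%:R * (k == c.-1)%:R.
Proof.
move=> /andP[a0 ab] bc; rewrite -!D2_ramp; try lia.
by rewrite /D2 /hat; ring.
Qed.

Definition hat_slope (x y w al ga : R) :=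
  norm_slope x al + norm_slope y (- (al + ga)) + norm_slope w ga.

Lemma tv2_slope_hat n z mu a b c : (2 <= a)%N -> (a < b < c)%N -> (c <= n.-1)%N ->
  tv2_slope n z (fun s => mu * hat a b c s) =
  hat_slope (D2 z a.-1) (D2 z b.-1) (D2 z c.-1) (mu * (c - b)%:R) (mu * (b - a)%:R).
Proof.
move=> a2 /andP[ab bc] cn.
have ca : (c - a)%:R = (c - b)%:R + (b - a)%:R :> R by rewrite -natrD; congr _%:R; lia.
have pointwise k : norm_slope (D2 z k) (D2 (fun s => mu * hat a b c s) k) =
    (if k == a.-1 then norm_slope (D2 z a.-1) (mu * (c - b)%:R) else 0)
  + (if k == b.-1 then norm_slope (D2 z b.-1) (- (mu * (c - b)%:R + mu * (b - a)%:R)) else 0)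
  + (if k == c.-1 then norm_slope (D2 z c.-1) (mu * (b - a)%:R) else 0).
  rewrite D2Z D2_hat ?ca; try lia.
  have [->|ka] := eqVneq k a.-1; last have [->|kb] := eqVneq k b.-1;
    last have [->|kc] := eqVneq k c.-1.
  - have [-> ->] : (a.-1 == b.-1) = false /\ (a.-1 == c.-1) = false by split; lia.
    by rewrite /= ?mulr1n ?mulr0n mulr1 !mulr0 subr0 !addr0.
  - have -> : (b.-1 == c.-1) = false by lia.
    by rewrite /= ?mulr1n ?mulr0n mulr1 !mulr0 sub0r !addr0 add0r mulrN mulrDr.
  - by rewrite /= ?mulr1n ?mulr0n mulr1 !mulr0 subr0 !add0r.
  - by rewrite /= !mulr0n !mulr0 subr0 !addr0 mulr0 norm_slope0.
rewrite /tv2_slope (eq_bigr _ (fun k _ => pointwise k)) !big_split /= -!big_mkcond !big_nat1_eq.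
by rewrite !ifT //; lia.
Qed.
End Hat.

Definition hat_stationary {R : realFieldType} (x y w al ga : R) :=
  0 <= hat_slope x y w al ga /\ 0 <= hat_slope x y w (- al) (- ga).

Section HatSigns.
Variables (R : realFieldType) (x y w al ga : R).

Local Ltac sign_cases :=
  move=> al_gt0 ga_gt0;
  rewrite /hat_stationary /hat_slope /norm_slope -opprD opprK !normrN
    !gtr0_norm ?addr_gt0 //;
  case: (sgrP x) => _; case: (sgrP y) => _; case: (sgrP w) => _ //= => * [? ?]; lra.

Lemma hat_unstable_yw : 0 < al -> 0 < ga ->
  y != 0 -> Num.sg w = - Num.sg y -> ~ hat_stationary x y w al ga.
Proof. sign_cases. Qed.

Lemma hat_unstable_xy : 0 < al -> 0 < ga ->
  x != 0 -> Num.sg y = - Num.sg x -> ~ hat_stationary x y w al ga.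
Proof. sign_cases. Qed.

Lemma hat_unstable_xw : 0 < al -> 0 < ga ->
  x != 0 -> y != 0 -> Num.sg w = - Num.sg x -> ~ hat_stationary x y w al ga.
Proof. sign_cases. Qed.
End HatSigns.

Lemma optimal_hat_stationary (R : realFieldType) n M (y : nat -> R) eps z a b c :
  optimal n M y eps z -> (2 <= a)%N -> (a < b < c)%N -> (c <= n.-1)%N ->
  (forall s, M s -> (s <= a)%N || (c <= s)%N) ->
  hat_stationary (D2 z a.-1) (D2 z b.-1) (D2 z c.-1) (c - b)%:R (b - a)%:R.
Proof.
move=> opt a2 abc cn hM.
have slope_ge0 mu :
    0 <= hat_slope (D2 z a.-1) (D2 z b.-1) (D2 z c.-1) (mu * (c - b)%:R) (mu * (b - a)%:R).
  rewrite -(tv2_slope_hat (n := n)) //; apply: optimal_tv2_slope_ge0 opt _ => s Ms.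
  by rewrite hat_out ?mulr0 ?hM.
by split; [have := slope_ge0 1 | have := slope_ge0 (-1)]; rewrite ?mul1r ?mulN1r.
Qed.

Lemma twin_union_gap n M i j : twin_union n M -> M i -> M j -> (i.+1 < j)%N ->
  (forall m, (i < m < j)%N -> ~~ M m) -> (2 <= i)%N /\ (j <= n.-1)%N.
Proof.
move=> [_ twin] Mi Mj ij gap; split.
- have [p [[->|<-] p1 _ _ Mp1]] := twin i Mi; last lia.
  by move: (gap i.+1); rewrite Mp1 /=; lia.
- have [p [[->|pj] _ pn Mp _]] := twin j Mj; first lia.
  subst j.
  by move: (gap p); rewrite Mp /=; lia.
Qed.

Lemma optimal_gap_hat_stationary (R : realFieldType) n M (y : nat -> R) eps z i j a b c :
  optimal n M y eps z -> twin_union n M -> M i -> M j -> (i.+1 < j)%N ->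
  (forall m, (i < m < j)%N -> ~~ M m) ->
  (i <= a)%N -> (a < b < c)%N -> (c <= j)%N ->
  hat_stationary (D2 z a.-1) (D2 z b.-1) (D2 z c.-1) (c - b)%:R (b - a)%:R.
Proof.
move=> opt twin Mi Mj ij gap ia abc cj.
have [i2 jn] := twin_union_gap twin Mi Mj ij gap.
apply: optimal_hat_stationary opt _ abc _ _; try lia.
move=> s Ms; case: (leqP s a) => //= sa; case: (leqP c s) => //= sc.
by move: (gap s); rewrite Ms /=; lia.
Qed.

Lemma sgr_neq_opp (R : realDomainType) (u v : R) :
  Num.sg u != 0 -> Num.sg v != 0 -> Num.sg u != Num.sg v -> Num.sg v = - Num.sg u.
Proof. by case: sgrP => _; case: sgrP => _; rewrite ?eqxx ?opprK. Qed.

Theorem theorem3 (R : realFieldType) (n : nat) (eps : R) (M : pred nat)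
  (y zs : nat -> R) :
  (3 <= n)%N -> 0 <= eps ->
  twin_union n M -> M 1%N -> M n ->
  optimal n M y eps zs ->
  sign_consistent n M zs.
Proof.
move=> _ _ twin _ _ opt i j Mi Mj ij gap.
have [flat|/allPn[m]] := boolP (all (fun k => sgn2 zs k == 0) (index_iota i.+1 j)).
  by right=> k ikj; apply/eqP/(allP flat); rewrite mem_index_iota.
rewrite mem_index_iota => /andP[im mj] sm; left.
have stat := optimal_gap_hat_stationary opt twin Mi Mj (leq_ltn_trans im mj) gap.
have pos u v : (u < v)%N -> 0 < (v - u)%:R :> R by move=> uv; rewrite ltr0n subn_gt0.
move=> k h /andP[ik kj] /andP[ih hj] /andP[k2 _] /andP[h2 _] sk sh.
wlog kh : k h ik kj ih hj k2 h2 sk sh / (k < h)%N => [W|].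
  by case: (ltngtP k h) => [kh|hk|->] //; [apply: W | apply/esym/W].
apply/eqP/negPn/negP => /(sgr_neq_opp sk sh) opp.
move: sk sh sm; rewrite /sgn2 !sgr_eq0 => sk sh sm.
have [ik'|ki] := ltnP i k.
  by apply: (hat_unstable_yw _ _ sk opp (stat i k h _ _ _)); rewrite ?pos ?ik' ?kh.
have ? : k = i by lia.
subst k.
have [hj'|jh] := ltnP h j.
  by apply: (hat_unstable_xy _ _ sk opp (stat i h j _ _ _)); rewrite ?pos ?kh ?hj'.
have ? : h = j by lia.
subst h.
by apply: (hat_unstable_xw _ _ sk sm opp (stat i m j _ _ _)); rewrite ?pos ?im ?mj.
Qed.
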